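(* Let $G$ be a loopless multigraph with $n$ vertices, $m$ edges and maximum degree $\Delta$, and let $q\in\mathbb{N}$ and $\lambda\ge1$. Then $$Z(G,\lambda,q)\le\left(1+q^{-1}(\lambda^\Delta-1)\right)^{\lceil m/\Delta\rceil}q^n.$$ Moreover, if $\Delta$ divides $m$ and $2m/\Delta\le n$, equality holds for $G=H(n,m,\Delta)$.
   Context: For a loopless multigraph $G=(V,E)$ (multiple edges allowed), $Z(G,\lambda,q)=\sum_{\sigma\in[q]^V}\lambda^{\mu(\sigma)}$, where $\mu(\sigma)$ is the number of edges (counted with multiplicity) whose two endpoints receive the same colour under $\sigma$. For positive integers $n,m,\Delta$ with $\Delta\mid m$ and $m\le\Delta n/2$, $H(n,m,\Delta)$ is the multigraph on $n$ vertices obtained by taking $m/\Delta$ pairwise disjoint (independent) edges and replacing each by $\Delta$ parallel edges. *)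

From HB Require Import structures.
From mathcomp Require Import all_boot all_order all_algebra.
Set Implicit Arguments. Unset Strict Implicit. Unset Printing Implicit Defensive.
Import Order.TTheory GRing.Theory Num.Theory.

(* A loopless multigraph on a finite vertex type V is given by its edge list
   E : seq (V * V); parallel edges are repeated entries.  n = #|V|, m = size E. *)
Definition loopless (V : eqType) (E : seq (V * V)) : bool :=
  all (fun e => e.1 != e.2) E.

Definition deg (V : eqType) (E : seq (V * V)) (v : V) : nat :=
  count (fun e => (e.1 == v) || (e.2 == v)) E.

Definition maxdeg (V : finType) (E : seq (V * V)) : nat :=
  \max_(v : V) deg E v.

Definition mu (V : finType) (q : nat) (E : seq (V * V)) (s : {ffun V -> 'I_q}) : nat :=
  count (fun e => s e.1 == s e.2) E.

Definition Zpart (R : realFieldType) (V : finType) (E : seq (V * V)) (lam : R) (q : nat) : R :=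
  (\sum_(s : {ffun V -> 'I_q}) lam ^+ mu E s)%R.

(* ceiling of m / d (for d = 0 this is 0) *)
Definition ceildiv (m d : nat) : nat := (m + d.-1) %/ d.

Definition Zbound (R : realFieldType) (lam : R) (q n m D : nat) : R :=
  ((1 + (q%:R)^-1 * (lam ^+ D - 1)) ^+ ceildiv m D * (q%:R) ^+ n)%R.

(* H(n,m,D): on vertex set 'I_n, the m/D disjoint edges {2i, 2i+1} (i < m/D),
   each repeated D times. *)
Definition Hpairs (m D : nat) : seq (nat * nat) :=
  flatten [seq nseq D (2 * i, (2 * i).+1) | i <- iota 0 (m %/ D)].

Definition Hedges (n m D : nat) : seq ('I_n * 'I_n) :=
  pmap (fun p : nat * nat =>
          match insub p.1, insub p.2 with
          | Some a, Some b => Some (a, b)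
          | _, _ => None
          end) (Hpairs m D).

From HB Require Import structures.
From mathcomp Require Import all_boot all_order all_algebra.
From mathcomp Require Import zify ring lra.
Import Order.TTheory GRing.Theory Num.Theory.
Local Open Scope ring_scope.

(* Proof of the upper bound Z(G,lam,q) <= h(D)^ceil(m/D) q^n and of its
   tightness for H(n,m,D), where h k = 1 + q^-1 (lam^k - 1), so that
   q^2 h k is the partition function of a bundle of k parallel edges.

   Upper bound: pick a vertex v of positive degree d <= D.  Averaging over
   the colour of v, the edges at v contribute a factor at most
   q^-1 (lam^d + q - 1) = h d (superadditivity of k |-> lam^k - 1), so
   Z(G) <= h d * Z(G - star(v)).  By induction Z(G) <= q^n B(m), where
   B x = h(D)^(x / D) h(x mod D) packs x edges into full bundles of size D.
   The step h d * B a <= B (a + d) follows from the log-supermodularity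
   h(e+s) h(e+t) <= h(e+s+t) h(e), and finally B m <= h(D)^ceil(m/D).

   Tightness: H(n,m,D) is built by adding pendant bundles of D parallel
   edges on fresh vertex pairs; each such bundle multiplies Z by exactly h D. *)

Lemma ceildiv0 D : ceildiv 0 D = 0%N.
Proof. by case: D => // D; rewrite /ceildiv divn_small. Qed.

Lemma ceildiv_dvd m D : (0 < D)%N -> (D %| m)%N -> ceildiv m D = (m %/ D)%N.
Proof.
move=> D_gt0 /divnK m_eq; rewrite /ceildiv -{1}m_eq divnMDl //.
by rewrite [(D.-1 %/ D)%N]divn_small ?addn0 // ltn_predL.
Qed.

Section PottsBound.
Variables (R : realFieldType) (q : nat) (lam : R).
Hypotheses (q_gt0 : (0 < q)%N) (lam_ge1 : 1 <= lam).

Definition bundle (k : nat) : R := 1 + (q%:R)^-1 * (lam ^+ k - 1).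

Lemma bundle_ge1 k : 1 <= bundle k.
Proof.
rewrite /bundle lerDl mulr_ge0 ?invr_ge0 ?ler0n //.
by rewrite subr_ge0 exprn_ege1.
Qed.

Lemma bundle_ge0 k : 0 <= bundle k.
Proof. exact: le_trans ler01 (bundle_ge1 k). Qed.

Lemma bundle0 : bundle 0 = 1.
Proof. by rewrite /bundle expr0 subrr mulr0 addr0. Qed.

(* q h k = lam^k + q - 1 is the total weight of the q colours of one end of a
   k-fold bundle, the colour of the other end being fixed. *)
Lemma mul_q_bundle k : q%:R * bundle k = lam ^+ k + (q%:R - 1).
Proof.
have qn0 : (q%:R : R) != 0 by rewrite pnatr_eq0 -lt0n.
by rewrite /bundle mulrDr mulr1 mulrA mulfV // mul1r; ring.
Qed.

(* Log-supermodularity of the bundle weight: moving edges from a smaller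
   bundle to a larger one does not decrease the product. *)
Lemma bundle_supermodular e s t :
  bundle (e + s) * bundle (e + t) <= bundle (e + s + t) * bundle e.
Proof.
rewrite /bundle !exprD.
set A := lam ^+ e; set S := lam ^+ s; set T := lam ^+ t.
set u := (q%:R : R)^-1.
have hA : 1 <= A := exprn_ege1 e lam_ge1.
have hS : 1 <= S := exprn_ege1 s lam_ge1.
have hT : 1 <= T := exprn_ege1 t lam_ge1.
have hq : (1 : R) <= q%:R by rewrite ler1n.
have hu0 : 0 < u by rewrite /u invr_gt0; lra.
have hu1 : u <= 1 by rewrite /u invf_le1 //; lra.
have gap : (1 + u * (A * S * T - 1)) * (1 + u * (A - 1)) -
   (1 + u * (A * S - 1)) * (1 + u * (A * T - 1)) =
   u * A * (S - 1) * (T - 1) * (1 - u) by ring.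
by rewrite -subr_ge0 gap; repeat apply: mulr_ge0; lra.
Qed.

Lemma bundle_exchange a b c e : (a + b = c + e)%N -> (e <= a <= c)%N ->
  bundle a * bundle b <= bundle c * bundle e.
Proof.
move=> sum_eq /andP[ea ac].
have := bundle_supermodular e (a - e) (c - a).
have -> : (e + (a - e))%N = a by lia.
have -> : (e + (c - a))%N = b by lia.
by have -> : (a + (c - a))%N = c by lia.
Qed.

Definition packed (D x : nat) : R := bundle D ^+ (x %/ D) * bundle (x %% D).

Lemma packed_step D d a : (0 < D)%N -> (d <= D)%N ->
  bundle d * packed D a <= packed D (a + d).
Proof.
move=> D_gt0 dD; rewrite /packed {3 4}(divn_eq a D).
have rD : (a %% D < D)%N := ltn_pmod a D_gt0.
set j := (a %/ D)%N in rD *; set r := (a %% D)%N in rD *.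
have hDj_ge0 : 0 <= bundle D ^+ j by rewrite exprn_ge0 // bundle_ge0.
rewrite -addnA mulrCA.
have [small|big] := ltnP (r + d) D.
  rewrite divnMDl // modnMDl divn_small // modn_small // addn0 ler_wpM2l //.
  by rewrite -[X in _ <= X]mulr1 -bundle0 mulrC bundle_exchange //; lia.
have -> : (j * D + (r + d) = j.+1 * D + (r + d - D))%N by rewrite mulSn; lia.
rewrite divnMDl // modnMDl divn_small ?modn_small ?addn0; try lia.
rewrite exprS -mulrA [in X in _ <= X]mulrCA ler_wpM2l // mulrC.
by apply: bundle_exchange; lia.
Qed.

(* Rounding the last, partial bundle up to a full one. *)
Lemma packed_le_ceil D m : (0 < D)%N -> packed D m <= bundle D ^+ ceildiv m D.
Proof.
move=> D_gt0; rewrite /packed /ceildiv {3}(divn_eq m D).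
have rD : (m %% D < D)%N := ltn_pmod m D_gt0.
set j := (m %/ D)%N in rD *; set r := (m %% D)%N in rD *.
have [->|r_gt0] := posnP r.
  by rewrite bundle0 mulr1 addn0 divnMDl // divn_small ?addn0 //; lia.
have -> : (j * D + r + D.-1 = j.+1 * D + (r - 1))%N by rewrite mulSn; lia.
rewrite divnMDl // divn_small ?addn0; last by lia.
rewrite exprSr ler_wpM2l ?exprn_ge0 ?bundle_ge0 // lerD2l.
rewrite ler_wpM2l ?invr_ge0 ?ler0n // lerD2r.
by apply: ler_weXn2l; lia.
Qed.

Lemma expr_superadditive {I : Type} (r : seq I) (k : I -> nat) :
  \sum_(i <- r) (lam ^+ k i - 1) <= lam ^+ (\sum_(i <- r) k i)%N - 1.
Proof.
elim: r => [|x r IH]; first by rewrite !big_nil expr0 subrr.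
rewrite !big_cons exprD; apply: le_trans (lerD (lexx _) IH) _.
have ha := exprn_ege1 (k x) lam_ge1.
have hb := exprn_ege1 (\sum_(i <- r) k i)%N lam_ge1.
set a := lam ^+ k x in ha *; set b := lam ^+ _ in hb *.
have -> : a * b - 1 = (a - 1) + (b - 1) + (a - 1) * (b - 1) by ring.
by rewrite lerDl mulr_ge0 // subr_ge0.
Qed.

Lemma sum_indicator (w : 'I_q) : (\sum_(c : 'I_q) (c == w))%N = 1%N.
Proof. by rewrite (bigD1 w) //= eqxx big1 // => c /negbTE ->. Qed.

Section Colourings.
Variable V : finType.
Implicit Types (E : seq (V * V)) (s : {ffun V -> 'I_q}).

Definition recolour s (v : V) (c : 'I_q) : {ffun V -> 'I_q} :=
  [ffun x => if x == v then c else s x].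

Definition incident (v : V) : pred (V * V) := fun e => (e.1 == v) || (e.2 == v).

Lemma sum_recolour (v : V) (F : {ffun V -> 'I_q} -> R) :
  q%:R * \sum_s F s = \sum_s \sum_(c : 'I_q) F (recolour s v c).
Proof.
rewrite pair_big /=.
pose swap (p : {ffun V -> 'I_q} * 'I_q) := (recolour p.1 v p.2, p.1 v).
have swapK : involutive swap.
  move=> [s c]; rewrite /swap /= /recolour ffunE eqxx; congr (_, _).
  by apply/ffunP => x; rewrite !ffunE; case: eqP => [->|].
have -> : \sum_(p : {ffun V -> 'I_q} * 'I_q) F (recolour p.1 v p.2) =
   \sum_(p : {ffun V -> 'I_q} * 'I_q) F p.1.
  by rewrite [RHS](reindex_inj (inv_inj swapK)).
have -> : \sum_(p : {ffun V -> 'I_q} * 'I_q) F p.1 = \sum_s \sum_(c : 'I_q) F s.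
  by rewrite pair_big.
rewrite mulr_sumr; apply: eq_bigr => s _.
by rewrite sumr_const card_ord mulr_natl.
Qed.

Lemma Zpart_nil : Zpart ([::] : seq (V * V)) lam q = q%:R ^+ #|V|.
Proof.
rewrite /Zpart (eq_bigr (fun _ => 1)) => [|s _]; last by rewrite expr0.
by rewrite sumr_const card_ffun card_ord natrX.
Qed.

Lemma Zpart_perm {E E' : seq (V * V)} :
  perm_eq E E' -> Zpart E lam q = Zpart E' lam q.
Proof. by move=> /permP EE'; apply: eq_bigr => s _; rewrite /mu EE'. Qed.

Lemma loopless_filter (a : pred (V * V)) E :
  loopless E -> loopless (filter a E).
Proof.
by move=> lE; apply/allP => e; rewrite mem_filter => /andP[_ /(allP lE)].
Qed.

Lemma mu_recolour_away (v : V) E s c : all (predC (incident v)) E ->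
  mu E (recolour s v c) = mu E s.
Proof.
move=> /allP away; apply: eq_in_count => e /away /=.
rewrite negb_or => /andP[/negbTE e1 /negbTE e2].
by rewrite !ffunE e1 e2.
Qed.

Lemma Zpart_split_vertex (v : V) E1 E2 : all (predC (incident v)) E1 ->
  q%:R * Zpart (E1 ++ E2) lam q =
  \sum_s lam ^+ mu E1 s * \sum_(c : 'I_q) lam ^+ mu E2 (recolour s v c).
Proof.
move=> away; rewrite /Zpart (sum_recolour v); apply: eq_bigr => s _.
rewrite mulr_sumr; apply: eq_bigr => c _.
by rewrite /mu count_cat exprD -/(mu E1 _) mu_recolour_away.
Qed.

(* Each loopless edge at v is monochromatic for exactly one colour of v. *)
Lemma sum_mu_star (v : V) E s : all (incident v) E -> loopless E ->
  (\sum_(c : 'I_q) mu E (recolour s v c))%N = size E.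
Proof.
elim: E => [|e E IH] /=; first by rewrite big1.
move=> /andP[ve vE] /andP[le lE]; rewrite big_split /= IH //.
suff -> : (\sum_(c < q) (recolour s v c e.1 == recolour s v c e.2))%N = 1%N by [].
move: ve le; rewrite /incident.
have [e1v|e1v] /= := eqVneq e.1 v => [_ e12|e2v _].
  have e2v : (e.2 == v) = false by apply/negbTE; rewrite -e1v eq_sym.
  under eq_bigr do rewrite !ffunE e1v eqxx e2v.
  exact: sum_indicator.
under eq_bigr do rewrite !ffunE (negbTE e1v) e2v eq_sym.
exact: sum_indicator.
Qed.

(* Hence, by superadditivity, a star of size d at v contributes at most
   lam^d + q - 1 when the colour of v varies. *)
Lemma sum_star_le (v : V) E s : all (incident v) E -> loopless E ->
  \sum_(c : 'I_q) lam ^+ mu E (recolour s v c) <= lam ^+ size E + (q%:R - 1).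
Proof.
move=> vE lE; rewrite -(sum_mu_star v E s vE lE).
have := expr_superadditive (index_enum 'I_q) (fun c => mu E (recolour s v c)).
by rewrite sumrB sumr_const card_ord => le_sum; lra.
Qed.

Lemma Zpart_remove_vertex (v : V) E : loopless E ->
  Zpart E lam q <=
  Zpart (filter (predC (incident v)) E) lam q * bundle (deg E v).
Proof.
move=> lE; set E1 := filter _ E; set E2 := filter (incident v) E.
have perm_E : perm_eq E (E1 ++ E2) by rewrite perm_sym perm_catC perm_filterC.
have away : all (predC (incident v)) E1 by exact: filter_all.
have star : all (incident v) E2 by exact: filter_all.
have q_gt0R : (0 : R) < q%:R by rewrite ltr0n.
rewrite -(ler_pM2l q_gt0R) mulrCA mul_q_bundle (Zpart_perm perm_E).
rewrite (Zpart_split_vertex v) // /Zpart mulr_suml ler_sum // => s _.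
rewrite ler_wpM2l ?exprn_ge0 ?(le_trans ler01) //.
by rewrite /deg -size_filter sum_star_le // loopless_filter.
Qed.

Lemma Zpart_le_packed D E : (0 < D)%N -> loopless E ->
  (forall u, deg E u <= D)%N -> Zpart E lam q <= q%:R ^+ #|V| * packed D (size E).
Proof.
move=> D_gt0; have [N] := ubnP (size E).
elim: N E => // N IH [|e E0] sizeE lE degE.
  by rewrite Zpart_nil /packed div0n mod0n expr0 bundle0 !mulr1.
set E := e :: E0 in sizeE lE degE *; set v := e.1.
set E1 := filter (predC (incident v)) E.
have deg_gt0 : (0 < deg E v)%N by rewrite /deg /= /v eqxx.
have size_E : (size E1 + deg E v)%N = size E.
  by rewrite size_filter addnC count_predC.
have degE1 u : (deg E1 u <= D)%N.
  exact: leq_trans (leq_count_subseq _ (filter_subseq _ _)) (degE u).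
have IH1 := IH E1 ltac:(lia) (loopless_filter _ _ lE) degE1.
apply: le_trans (Zpart_remove_vertex v _ lE) _.
rewrite -size_E mulrC; apply: le_trans (ler_wpM2l (bundle_ge0 _) IH1) _.
by rewrite mulrCA ler_wpM2l ?exprn_ge0 ?ler0n // packed_step.
Qed.

Lemma Zpart_le_Zbound E : loopless E ->
  Zpart E lam q <= Zbound lam q #|V| (size E) (maxdeg E).
Proof.
case: E => [|e E0] lE; first by rewrite Zpart_nil /Zbound ceildiv0 expr0 mul1r.
set E := e :: E0 in lE *.
have degE u : (deg E u <= maxdeg E)%N by exact: leq_bigmax.
have D_gt0 : (0 < maxdeg E)%N.
  by apply: leq_trans (degE e.1); rewrite /deg /= eqxx.
apply: le_trans (Zpart_le_packed _ _ D_gt0 lE degE) _.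
rewrite /Zbound mulrC ler_wpM2r ?exprn_ge0 ?ler0n //.
exact: packed_le_ceil.
Qed.

Lemma Zpart_add_bundle E (a b : V) k : a != b -> all (predC (incident a)) E ->
  Zpart (E ++ nseq k (a, b)) lam q = Zpart E lam q * bundle k.
Proof.
move=> ab away; have qn0 : (q%:R : R) != 0 by rewrite pnatr_eq0 -lt0n.
apply: (mulfI qn0); rewrite (Zpart_split_vertex a) // mulrCA mul_q_bundle.
rewrite /Zpart mulr_suml; apply: eq_bigr => s _; congr (_ * _).
have mono c : lam ^+ mu (nseq k (a, b)) (recolour s a c) =
              1 + (c == s b)%:R * (lam ^+ k - 1).
  rewrite /mu count_nseq /= !ffunE eqxx [b == a]eq_sym (negbTE ab).
  by case: (c == s b); rewrite /= ?mul1n ?mul0n ?expr0; ring.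
rewrite (eq_bigr _ (fun c _ => mono c)) big_split /= sumr_const card_ord.
by rewrite -mulr_suml -natr_sum sum_indicator; ring.
Qed.

End Colourings.

Arguments incident {V} v.

Definition Hblocks (n D k : nat) : seq ('I_n * 'I_n) :=
  pmap (fun p : nat * nat =>
          match insub p.1, insub p.2 with
          | Some a, Some b => Some (a, b)
          | _, _ => None
          end) (flatten [seq nseq D (2 * i, (2 * i).+1) | i <- iota 0 k]).

Lemma Hedges_blocks n m D : Hedges n m D = Hblocks n D (m %/ D).
Proof. by []. Qed.

Lemma Hblocks_step {n} D {k}
    (lt_a : (2 * k < n)%N) (lt_b : ((2 * k).+1 < n)%N) :
  Hblocks n D k.+1 = Hblocks n D k ++ nseq D (Ordinal lt_a, Ordinal lt_b).
Proof.
rewrite /Hblocks -[k.+1]addn1 iotaD map_cat flatten_cat pmap_cat /= cats0 add0n.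
congr (_ ++ _); elim: D => //= D ->.
by rewrite (insubT (fun x => x < n)%N lt_a) (insubT (fun x => x < n)%N lt_b).
Qed.

Lemma Hblocks_support {n} D {k} : (2 * k <= n)%N ->
  all (fun e : 'I_n * 'I_n => (e.1 < 2 * k) && (e.2 < 2 * k))%N (Hblocks n D k).
Proof.
elim: k => [|k IH] fit //.
have lt_a : (2 * k < n)%N by lia.
have lt_b : ((2 * k).+1 < n)%N by lia.
rewrite (Hblocks_step D lt_a lt_b) all_cat all_nseq; apply/andP; split.
  by apply: sub_all (IH ltac:(lia)) => e /andP[e1 e2]; apply/andP; split; lia.
by apply/orP; right; apply/andP; split => /=; lia.
Qed.

Lemma Zpart_Hblocks n D k : (2 * k <= n)%N ->
  Zpart (Hblocks n D k) lam q = q%:R ^+ n * bundle D ^+ k.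
Proof.
elim: k => [|k IH] fit; first by rewrite /Hblocks /= Zpart_nil card_ord mulr1.
have lt_a : (2 * k < n)%N by lia.
have lt_b : ((2 * k).+1 < n)%N by lia.
have ab : Ordinal lt_a != Ordinal lt_b by rewrite -val_eqE /=; lia.
have away : all (predC (incident (Ordinal lt_a))) (Hblocks n D k).
  apply: sub_all (Hblocks_support D (ltnW lt_a)) => e /andP[e1 e2].
  by rewrite /= /incident negb_or -!val_eqE /=; apply/andP; split; lia.
by rewrite (Hblocks_step D lt_a lt_b) Zpart_add_bundle // IH ?exprS; [ring | lia].
Qed.

End PottsBound.

Theorem theorem3p1 (R : realFieldType) (q : nat) (lam : R) :
  (0 < q)%N -> 1 <= lam ->
  (forall (V : finType) (E : seq (V * V)), loopless E ->
     Zpart E lam q <= Zbound lam q #|V| (size E) (maxdeg E))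
  /\
  (forall n m D : nat, (0 < n)%N -> (0 < m)%N -> (0 < D)%N ->
     (D %| m)%N -> (2 * (m %/ D) <= n)%N ->
     Zpart (Hedges n m D) lam q = Zbound lam q n m D).
Proof.
move=> q_gt0 lam_ge1; split; first by move=> V E; exact: Zpart_le_Zbound.
move=> n m D _ _ D_gt0 D_dvd_m fit.
by rewrite Hedges_blocks Zpart_Hblocks // /Zbound ceildiv_dvd // mulrC.
Qed.
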